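(* Let $(E,\|\cdot\|_E)$ be a fully symmetric sequence space. The following are equivalent: (i) $E$ has the uniform individual ergodic theorem property, i.e. for every $x\in E$ and every Dunford–Schwartz operator $T$ on $l_\infty$ there exists $\widehat{x}\in E$ with $\big\|\frac1n\sum_{k=0}^{n-1}T^k(x)-\widehat{x}\big\|_\infty\to0$; (ii) $E\subset c_0$; (iii) $\mathbf 1=\{1,1,1,\dots\}\notin E$.
   Context: $l_\infty$ is the Banach lattice of bounded real sequences $x=\{(x)_n\}_{n\ge1}$ with $\|x\|_\infty=\sup_n|(x)_n|$; $c_0$ is the subspace of sequences converging to $0$; $l_1$ is the space of absolutely summable sequences with $\|x\|_1=\sum_n|(x)_n|$. A linear operator $T:l_\infty\to l_\infty$ is a Dunford–Schwartz operator if $\|T(x)\|_1\le\|x\|_1$ for all $x\in l_1$ and $\|T(x)\|_\infty\le\|x\|_\infty$ for all $x\in l_\infty$. For $x\in l_\infty$, its non-increasing rearrangement is the sequence $x^*$ with $(x^* )_n=\inf\{\sup_{m\notin F}|(x)_m| : F\subset\mathbb N\text{ finite}, \operatorname{card}(F)<n\}$. A symmetric sequence space is a nonzero linear subspace $E\subset l_\infty$ with a Banach norm $\|\cdot\|_E$ such that $y\in E$, $x\in l_\infty$, $x^*\le y^*$ imply $x\in E$ and $\|x\|_E\le\|y\|_E$ (normalized so that $\|\{1,0,0,\dots\}\|_E=1$). Write $x\prec y$ if $\sum_{n=1}^k(x^* )_n\le\sum_{n=1}^k(y^* )_n$ for all $k$. A symmetric sequence space $E$ is fully symmetric if $x\in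 l_\infty$, $y\in E$, $x\prec y$ imply $x\in E$ and $\|x\|_E\le\|y\|_E$. *)

(* Stdlib reals + Coquelicot. Sequences are functions nat -> R,
   indexed from 0 (the paper's index n >= 1 corresponds to n-1 here). *)
From Stdlib Require Import Reals List.
From Coquelicot Require Import Coquelicot.
Open Scope R_scope.

Definition seqR := nat -> R.

Definition sadd (x y : seqR) : seqR := fun n => x n + y n.
Definition sscal (a : R) (x : seqR) : seqR := fun n => a * x n.
Definition ssub (x y : seqR) : seqR := fun n => x n - y n.
Definition szero : seqR := fun _ => 0.

Definition bounded (x : seqR) : Prop := exists M, forall n, Rabs (x n) <= M.

(* sup norm (meaningful for bounded x) *)
Definition linf_norm (x : seqR) : R :=
  real (Lub_Rbar (fun r => exists m, r = Rabs (x m))).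

Definition in_l1 (x : seqR) : Prop := ex_series (fun n => Rabs (x n)).
Definition l1_norm (x : seqR) : R := Series (fun n => Rabs (x n)).

Definition in_c0 (x : seqR) : Prop := is_lim_seq x 0.

(* Linear operators l_infty -> l_infty, represented by functions on seqR
   whose behaviour outside l_infty is irrelevant. *)
Definition linf_linear_op (T : seqR -> seqR) : Prop :=
  (forall x, bounded x -> bounded (T x)) /\
  (forall x y a b, bounded x -> bounded y ->
     T (sadd (sscal a x) (sscal b y)) = sadd (sscal a (T x)) (sscal b (T y))).

Definition dunford_schwartz (T : seqR -> seqR) : Prop :=
  linf_linear_op T /\
  (forall x, in_l1 x -> in_l1 (T x) /\ l1_norm (T x) <= l1_norm x) /\
  (forall x, bounded x -> linf_norm (T x) <= linf_norm x).

Definition sup_outside (x : seqR) (F : list nat) : R :=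
  real (Lub_Rbar (fun r => exists m, ~ In m F /\ r = Rabs (x m))).

(* Non-increasing rearrangement, 0-indexed:
   (x^* ) n = inf { sup_{m notin F} |x_m| : F finite, card F <= n }
   (paper's index n+1, condition card F < n+1). Finite sets of naturals are
   represented by duplicate-free lists. *)
Definition rearr (x : seqR) (n : nat) : R :=
  real (Glb_Rbar (fun r => exists F : list nat,
                     NoDup F /\ (length F <= n)%nat /\ r = sup_outside x F)).

Definition majorized (x y : seqR) : Prop :=
  forall k : nat, sum_n (rearr x) k <= sum_n (rearr y) k.

Definition e1 : seqR := fun n => if Nat.eqb n 0 then 1 else 0.

Definition banach_subspace_linf (E : seqR -> Prop) (normE : seqR -> R) : Prop :=
  (forall x, E x -> bounded x) /\
  E szero /\
  (exists x, E x /\ x <> szero) /\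
  (forall x y, E x -> E y -> E (sadd x y)) /\
  (forall a x, E x -> E (sscal a x)) /\
  (forall x, E x -> 0 <= normE x) /\
  (forall x, E x -> normE x = 0 -> x = szero) /\
  (forall a x, E x -> normE (sscal a x) = Rabs a * normE x) /\
  (forall x y, E x -> E y -> normE (sadd x y) <= normE x + normE y) /\
  (forall u : nat -> seqR, (forall p, E (u p)) ->
     (forall eps, 0 < eps -> exists N, forall p q, (N <= p)%nat -> (N <= q)%nat ->
        normE (ssub (u p) (u q)) < eps) ->
     exists x, E x /\ is_lim_seq (fun p => normE (ssub (u p) x)) 0).

Definition symmetric_seq_space (E : seqR -> Prop) (normE : seqR -> R) : Prop :=
  banach_subspace_linf E normE /\
  (forall x y, E y -> bounded x -> (forall n, rearr x n <= rearr y n) ->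
     E x /\ normE x <= normE y) /\
  normE e1 = 1.

Definition fully_symmetric_seq_space (E : seqR -> Prop) (normE : seqR -> R) : Prop :=
  symmetric_seq_space E normE /\
  (forall x y, bounded x -> E y -> majorized x y -> E x /\ normE x <= normE y).

Definition cesaro (T : seqR -> seqR) (x : seqR) (N : nat) : seqR :=
  fun m => / INR (S N) * sum_n (fun k => Nat.iter k T x m) N.

Definition uniform_IET_property (E : seqR -> Prop) : Prop :=
  forall x, E x -> forall T, dunford_schwartz T ->
    exists xh, E xh /\ is_lim_seq (fun N => linf_norm (ssub (cesaro T x N) xh)) 0.

Definition one_seq : seqR := fun _ => 1.

From Pilot Require Import Defs.
From Stdlib Require Import Reals List Lra Lia FunctionalExtensionality Classical ClassicalEpsilon.
From Coquelicot Require Import Coquelicot.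
(* [Reals] has its own [bounded]; re-importing [Defs] makes [Defs.bounded] win. *)
Import Pilot.Defs.
Open Scope R_scope.

(* (ii) <-> (iii): if x is not in c_0 then |x_m| >= e infinitely often, so 1 is
   dominated in rearrangement by x / e and lies in E; and 1 is not in c_0.
   (i) -> (iii): for the shift, the Cesaro averages of 1 at coordinate N are 1 and 1/2
   at orders N + 1 and 2N + 2, so they have no uniform limit.
   (ii) -> (i): write x in c_0 as a finitely supported part plus a uniformly small one.
   A Dunford-Schwartz operator is an l_2 contraction (Riesz-Thorin through the Schur
   test), so for y in l_1 the squared l_2 norms of the averages A_N y tend to their
   infimum r, while the midpoint of any two averages still has squared norm >= r;
   uniform convexity of l_2 then makes (A_N y) uniformly Cauchy.  The uniform limit
   of A_N x is majorized by x (Calderon): clipping x at the level x*_k splits it into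
   a part bounded by x*_k and an l_1 part of norm sum_{j<k} x*_j - k x*_k, and the
   averages preserve both bounds.  Full symmetry puts the limit in E. *)

Fixpoint sum_lt (f : nat -> R) (n : nat) : R :=
  match n with O => 0 | S n => sum_lt f n + f n end.

Lemma sum_lt_ext f g n : (forall i, (i < n)%nat -> f i = g i) -> sum_lt f n = sum_lt g n.
Proof.
  induction n as [|n IH]; intros H; simpl; [reflexivity|].
  rewrite IH, H; [reflexivity|lia|intros; apply H; lia].
Qed.

Lemma sum_lt_plus f g n : sum_lt (fun i => f i + g i) n = sum_lt f n + sum_lt g n.
Proof. induction n; simpl; lra. Qed.

Lemma sum_lt_minus f g n : sum_lt (fun i => f i - g i) n = sum_lt f n - sum_lt g n.
Proof. induction n; simpl; lra. Qed.

Lemma sum_lt_scal c f n : sum_lt (fun i => c * f i) n = c * sum_lt f n.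
Proof. induction n as [|n IH]; simpl; [|rewrite IH]; ring. Qed.

Lemma sum_lt_const c n : sum_lt (fun _ => c) n = INR n * c.
Proof. induction n as [|n IH]; simpl sum_lt; [simpl; ring|rewrite IH, S_INR; ring]. Qed.

Lemma sum_lt_le f g n : (forall i, (i < n)%nat -> f i <= g i) -> sum_lt f n <= sum_lt g n.
Proof.
  induction n as [|n IH]; intros H; simpl; [lra|].
  apply Rplus_le_compat; [apply IH; intros; apply H|apply H]; lia.
Qed.

Lemma sum_lt_ge0 f n : (forall i, 0 <= f i) -> 0 <= sum_lt f n.
Proof. intros H; induction n; simpl; [lra|]. specialize (H n); lra. Qed.

Lemma sum_lt_mono f m n : (forall i, 0 <= f i) -> (m <= n)%nat -> sum_lt f m <= sum_lt f n.
Proof. intros H Hmn; induction Hmn; simpl; [lra|]. specialize (H m0); lra. Qed.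

Lemma Rabs_sum_lt f n : Rabs (sum_lt f n) <= sum_lt (fun i => Rabs (f i)) n.
Proof.
  induction n; simpl; [rewrite Rabs_R0; lra|].
  eapply Rle_trans; [apply Rabs_triang|lra].
Qed.

Lemma sum_lt_swap (f : nat -> nat -> R) m n :
  sum_lt (fun i => sum_lt (fun j => f i j) n) m = sum_lt (fun j => sum_lt (fun i => f i j) m) n.
Proof.
  induction m as [|m IH]; simpl.
  - induction n; simpl; lra.
  - rewrite IH, <- sum_lt_plus; reflexivity.
Qed.

Lemma sum_lt_add_range f n m : sum_lt f (n + m) = sum_lt f n + sum_lt (fun k => f (n + k)%nat) m.
Proof.
  induction m as [|m IH]; simpl; [rewrite Nat.add_0_r; ring|].
  rewrite Nat.add_succ_r; simpl; rewrite IH; ring.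
Qed.

Lemma sum_lt_shift f j n :
  sum_lt (fun k => f (k + j)%nat) n = sum_lt f n + sum_lt (fun l => f (n + l)%nat) j - sum_lt f j.
Proof.
  rewrite (sum_lt_ext _ (fun k => f (j + k)%nat)) by (intros; f_equal; lia).
  pose proof (sum_lt_add_range f j n) as Hjn; pose proof (sum_lt_add_range f n j).
  rewrite (Nat.add_comm j n) in Hjn; lra.
Qed.

Lemma sum_n_sum_lt f n : sum_n f n = sum_lt f (S n).
Proof.
  induction n as [|n IH]; [rewrite sum_O; simpl; symmetry; apply Rplus_0_l|].
  rewrite sum_Sn, IH; reflexivity.
Qed.

Lemma le_real_Lub (P : R -> Prop) x : (exists B, forall y, P y -> y <= B) -> P x -> x <= real (Lub_Rbar P).
Proof.
  intros [B HB] Hx; destruct (Lub_Rbar_correct P) as [Hub Hl].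
  assert (H2 : Rbar_le (Lub_Rbar P) B) by (apply Hl; intros y Hy; apply HB; auto).
  specialize (Hub x Hx); destruct (Lub_Rbar P); simpl in *; tauto.
Qed.

Lemma real_Lub_le (P : R -> Prop) M : (exists x, P x) -> (forall y, P y -> y <= M) -> real (Lub_Rbar P) <= M.
Proof.
  intros [x Hx] HB; destruct (Lub_Rbar_correct P) as [Hub Hl].
  assert (H2 : Rbar_le (Lub_Rbar P) M) by (apply Hl; intros y Hy; apply HB; auto).
  specialize (Hub x Hx); destruct (Lub_Rbar P); simpl in *; tauto.
Qed.

Lemma real_Glb_le (P : R -> Prop) x : (exists B, forall y, P y -> B <= y) -> P x -> real (Glb_Rbar P) <= x.
Proof.
  intros [B HB] Hx; destruct (Glb_Rbar_correct P) as [Hlb Hg].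
  assert (H2 : Rbar_le B (Glb_Rbar P)) by (apply Hg; intros y Hy; apply HB; auto).
  specialize (Hlb x Hx); destruct (Glb_Rbar P); simpl in *; tauto.
Qed.

Lemma le_real_Glb (P : R -> Prop) M : (exists x, P x) -> (forall y, P y -> M <= y) -> M <= real (Glb_Rbar P).
Proof.
  intros [x Hx] HB; destruct (Glb_Rbar_correct P) as [Hlb Hg].
  assert (H2 : Rbar_le M (Glb_Rbar P)) by (apply Hg; intros y Hy; apply HB; auto).
  specialize (Hlb x Hx); destruct (Glb_Rbar P); simpl in *; tauto.
Qed.

Lemma real_Lub_approx (P : R -> Prop) e : (exists x, P x) -> 0 < e ->
  exists y, P y /\ real (Lub_Rbar P) - e < y.
Proof.
  intros Hx He; apply NNPP; intros Hn.
  assert (real (Lub_Rbar P) <= real (Lub_Rbar P) - e); [|lra].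
  apply real_Lub_le; [eauto|]; intros y Hy; apply Rnot_lt_le; intros Hlt; eauto.
Qed.

Lemma real_Glb_approx (P : R -> Prop) e : (exists x, P x) -> 0 < e ->
  exists y, P y /\ y < real (Glb_Rbar P) + e.
Proof.
  intros Hx He; apply NNPP; intros Hn.
  assert (real (Glb_Rbar P) + e <= real (Glb_Rbar P)); [|lra].
  apply le_real_Glb; [eauto|]; intros y Hy; apply Rnot_lt_le; intros Hlt; eauto.
Qed.

Lemma not_In_gt_list_max (F : list nat) m : (list_max F < m)%nat -> ~ In m F.
Proof.
  intros Hm HF; assert (H : List.Forall (fun k => (k <= list_max F)%nat) F) by (apply list_max_le; lia).
  rewrite Forall_forall in H; specialize (H _ HF); lia.
Qed.

Lemma exists_not_In (F : list nat) : exists m, ~ In m F.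
Proof. exists (S (list_max F)); apply not_In_gt_list_max; lia. Qed.

Lemma Rabs_le_linf_norm (x : seqR) m : bounded x -> Rabs (x m) <= linf_norm x.
Proof. intros [M HM]; apply le_real_Lub; [exists M; intros y [k ->]|exists m]; auto. Qed.

Lemma linf_norm_le (x : seqR) M : (forall m, Rabs (x m) <= M) -> linf_norm x <= M.
Proof. intros H; apply real_Lub_le; [exists (Rabs (x 0%nat)), 0%nat|intros y [k ->]]; auto. Qed.

Lemma linf_norm_ge0 (x : seqR) : bounded x -> 0 <= linf_norm x.
Proof. intros Hb; eapply Rle_trans; [apply Rabs_pos|apply (Rabs_le_linf_norm x 0%nat Hb)]. Qed.

Lemma Rabs_le_sup_outside (x : seqR) F m : bounded x -> ~ In m F -> Rabs (x m) <= sup_outside x F.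
Proof. intros [M HM] Hm; apply le_real_Lub; [exists M; intros y [k [_ ->]]|exists m]; auto. Qed.

Lemma sup_outside_le (x : seqR) F M : (forall m, ~ In m F -> Rabs (x m) <= M) -> sup_outside x F <= M.
Proof.
  intros H; destruct (exists_not_In F) as [m0 Hm0].
  apply real_Lub_le; [exists (Rabs (x m0)), m0|intros y [k [Hk ->]]]; auto.
Qed.

Lemma sup_outside_ge0 (x : seqR) F : bounded x -> 0 <= sup_outside x F.
Proof.
  intros Hb; destruct (exists_not_In F) as [m0 Hm0].
  eapply Rle_trans; [apply Rabs_pos|apply (Rabs_le_sup_outside x F m0 Hb Hm0)].
Qed.

Lemma rearr_le_sup_outside (x : seqR) n F : bounded x -> NoDup F -> (length F <= n)%nat ->
  rearr x n <= sup_outside x F.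
Proof.
  intros Hb HF Hl; apply real_Glb_le; [|exists F; auto].
  exists 0; intros y [G [_ [_ ->]]]; apply sup_outside_ge0, Hb.
Qed.

Lemma le_rearr (x : seqR) n c : (forall F, NoDup F -> (length F <= n)%nat -> c <= sup_outside x F) -> c <= rearr x n.
Proof.
  intros H; apply le_real_Glb.
  - exists (sup_outside x nil), nil; repeat split; [constructor|simpl; lia].
  - intros y [G [HG [Hl ->]]]; auto.
Qed.

Definition vsum (f : nat -> seqR) (n : nat) : seqR := fun i => sum_lt (fun k => f k i) n.

Definition avg (T : seqR -> seqR) (x : seqR) (n : nat) : seqR :=
  sscal (/ INR n) (vsum (fun k => Nat.iter k T x) n).

Lemma cesaro_avg T x N : cesaro T x N = avg T x (S N).
Proof.
  apply functional_extensionality; intros m.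
  unfold cesaro, avg, sscal, vsum; rewrite sum_n_sum_lt; reflexivity.
Qed.

Lemma bounded_zero : bounded szero.
Proof. exists 0; intros; unfold szero; rewrite Rabs_R0; lra. Qed.

Lemma bounded_add u v : bounded u -> bounded v -> bounded (sadd u v).
Proof.
  intros [A HA] [B HB]; exists (A + B); intros n; unfold sadd.
  eapply Rle_trans; [apply Rabs_triang|]; specialize (HA n); specialize (HB n); lra.
Qed.

Lemma bounded_sub u v : bounded u -> bounded v -> bounded (ssub u v).
Proof.
  intros [A HA] [B HB]; exists (A + B); intros n; unfold ssub.
  eapply Rle_trans; [apply Rabs_triang|]; rewrite Rabs_Ropp; specialize (HA n); specialize (HB n); lra.
Qed.

Lemma bounded_scal c u : bounded u -> bounded (sscal c u).
Proof.
  intros [A HA]; exists (Rabs c * A); intros n; unfold sscal; rewrite Rabs_mult.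
  apply Rmult_le_compat_l; [apply Rabs_pos|auto].
Qed.

Lemma bounded_vsum f n : (forall k, (k < n)%nat -> bounded (f k)) -> bounded (vsum f n).
Proof.
  induction n as [|n IH]; intros H; [apply bounded_zero|].
  apply (bounded_add (vsum f n) (f n)); [apply IH; intros|]; apply H; lia.
Qed.

Section DunfordSchwartz.

Variable T : seqR -> seqR.
Hypothesis HT : dunford_schwartz T.

Lemma ds_bounded x : bounded x -> bounded (T x).
Proof. apply HT. Qed.

Lemma ds_add u v : bounded u -> bounded v -> T (sadd u v) = sadd (T u) (T v).
Proof.
  intros Hu Hv; destruct HT as [[_ Hlin] _].
  specialize (Hlin u v 1 1 Hu Hv).
  replace (sadd (sscal 1 u) (sscal 1 v)) with (sadd u v) in Hlin
    by (apply functional_extensionality; intros; unfold sadd, sscal; ring).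
  rewrite Hlin; apply functional_extensionality; intros; unfold sadd, sscal; ring.
Qed.

Lemma ds_scal c u : bounded u -> T (sscal c u) = sscal c (T u).
Proof.
  intros Hu; destruct HT as [[_ Hlin] _].
  specialize (Hlin u u c 0 Hu Hu).
  replace (sadd (sscal c u) (sscal 0 u)) with (sscal c u) in Hlin
    by (apply functional_extensionality; intros; unfold sadd, sscal; ring).
  rewrite Hlin; apply functional_extensionality; intros; unfold sadd, sscal; ring.
Qed.

Lemma ds_zero : T szero = szero.
Proof.
  replace szero with (sscal 0 szero) by (apply functional_extensionality; intros; unfold sscal, szero; ring).
  rewrite ds_scal by apply bounded_zero.
  apply functional_extensionality; intros; unfold sscal, szero; ring.
Qed.

Lemma ds_Rabs_le x M : bounded x -> (forall i, Rabs (x i) <= M) -> forall i, Rabs (T x i) <= M.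
Proof.
  intros Hx H i; destruct HT as [_ [_ Hinf]].
  eapply Rle_trans; [apply Rabs_le_linf_norm, ds_bounded, Hx|].
  eapply Rle_trans; [apply Hinf, Hx|apply linf_norm_le, H].
Qed.

Lemma iter_bounded k x : bounded x -> bounded (Nat.iter k T x).
Proof. intros Hx; induction k; simpl; auto using ds_bounded. Qed.

Lemma iter_add k u v : bounded u -> bounded v ->
  Nat.iter k T (sadd u v) = sadd (Nat.iter k T u) (Nat.iter k T v).
Proof. intros Hu Hv; induction k as [|k IH]; simpl; [|rewrite IH; apply ds_add]; auto using iter_bounded. Qed.

Lemma iter_scal k c u : bounded u -> Nat.iter k T (sscal c u) = sscal c (Nat.iter k T u).
Proof. intros Hu; induction k as [|k IH]; simpl; [|rewrite IH; apply ds_scal]; auto using iter_bounded. Qed.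

Lemma iter_zero k : Nat.iter k T szero = szero.
Proof. induction k as [|k IH]; simpl; [|rewrite IH; apply ds_zero]; reflexivity. Qed.

Lemma iter_Rabs_le k x M : bounded x -> (forall i, Rabs (x i) <= M) -> forall i, Rabs (Nat.iter k T x i) <= M.
Proof. intros Hx H; induction k; simpl; auto using ds_Rabs_le, iter_bounded. Qed.

Lemma iter_vsum j f n : (forall k, (k < n)%nat -> bounded (f k)) ->
  Nat.iter j T (vsum f n) = vsum (fun k => Nat.iter j T (f k)) n.
Proof.
  induction n as [|n IH]; intros H; [apply iter_zero|].
  change (vsum f (S n)) with (sadd (vsum f n) (f n)).
  rewrite iter_add, IH; [reflexivity|intros; apply H; lia|apply bounded_vsum; intros; apply H; lia|apply H; lia].
Qed.

Lemma avg_bounded u n : bounded u -> bounded (avg T u n).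
Proof. intros Hu; apply bounded_scal, bounded_vsum; intros; apply iter_bounded, Hu. Qed.

Lemma avg_add u v n : bounded u -> bounded v -> avg T (sadd u v) n = sadd (avg T u n) (avg T v n).
Proof.
  intros Hu Hv; apply functional_extensionality; intros i; unfold avg, sscal, vsum, sadd.
  rewrite (sum_lt_ext _ (fun k => Nat.iter k T u i + Nat.iter k T v i)), sum_lt_plus; [ring|].
  intros k _; change (fun n => u n + v n) with (sadd u v); rewrite iter_add by auto; reflexivity.
Qed.

Lemma avg_scal c u n : bounded u -> avg T (sscal c u) n = sscal c (avg T u n).
Proof.
  intros Hu; apply functional_extensionality; intros i; unfold avg, sscal, vsum.
  rewrite (sum_lt_ext _ (fun k => c * Nat.iter k T u i)), sum_lt_scal; [ring|].
  intros k _; change (fun n => c * u n) with (sscal c u); rewrite iter_scal by auto; reflexivity.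
Qed.

Lemma avg_Rabs_le u n M : bounded u -> (forall i, Rabs (u i) <= M) -> (0 < n)%nat ->
  forall i, Rabs (avg T u n i) <= M.
Proof.
  intros Hu H Hn i; unfold avg, sscal, vsum.
  assert (Hn' : 0 < INR n) by (apply lt_0_INR; auto).
  rewrite Rabs_mult, Rabs_right by (left; apply Rinv_0_lt_compat; auto).
  apply Rmult_le_reg_l with (INR n); auto.
  rewrite <- Rmult_assoc, Rinv_r, Rmult_1_l by lra.
  eapply Rle_trans; [apply Rabs_sum_lt|].
  rewrite <- sum_lt_const; apply sum_lt_le; intros; apply iter_Rabs_le; auto.
Qed.

End DunfordSchwartz.

Lemma in_c0_spec x : in_c0 x <-> forall e, 0 < e -> exists N, forall m, (N <= m)%nat -> Rabs (x m) < e.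
Proof.
  unfold in_c0; rewrite <- is_lim_seq_spec; split.
  - intros H e He; destruct (H (mkposreal e He)) as [N HN].
    exists N; intros m Hm; specialize (HN m Hm); rewrite Rminus_0_r in HN; exact HN.
  - intros H [e He]; destruct (H e He) as [N HN].
    exists N; intros m Hm; simpl; rewrite Rminus_0_r; auto.
Qed.

Definition l1_bounded_by (u : seqR) (B : R) : Prop :=
  forall m, sum_lt (fun i => Rabs (u i)) m <= B.

Lemma in_l1_of_bounded_by u B : l1_bounded_by u B -> in_l1 u.
Proof.
  intros H.
  assert (Hlim : ex_finite_lim_seq (sum_n (fun i => Rabs (u i)))).
  { apply ex_finite_lim_seq_incr with B; intros n; rewrite !sum_n_sum_lt; [|apply H].
    simpl; pose proof (Rabs_pos (u (S n))); lra. }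
  destruct Hlim as [l Hl]; exists l; exact Hl.
Qed.

Lemma l1_bounded_by_l1_norm u : in_l1 u -> l1_bounded_by u (l1_norm u).
Proof.
  intros Hu m.
  apply (is_lim_seq_le_loc (fun _ => sum_lt (fun i => Rabs (u i)) m) (sum_n (fun i => Rabs (u i)))
    (sum_lt (fun i => Rabs (u i)) m) (l1_norm u)); [|apply is_lim_seq_const|apply Series_correct, Hu].
  exists m; intros n Hn; rewrite sum_n_sum_lt; apply sum_lt_mono; [intros; apply Rabs_pos|lia].
Qed.

Lemma l1_norm_le u B : l1_bounded_by u B -> l1_norm u <= B.
Proof.
  intros H; apply (is_lim_seq_le (sum_n (fun i => Rabs (u i))) (fun _ => B) (l1_norm u) B).
  - intros n; rewrite sum_n_sum_lt; apply H.
  - apply Series_correct, (in_l1_of_bounded_by u B H).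
  - apply is_lim_seq_const.
Qed.

Lemma l1_bound_ge0 u B : l1_bounded_by u B -> 0 <= B.
Proof. intros H; apply (H 0%nat). Qed.

Lemma l1_bounded_by_Rabs_le u B i : l1_bounded_by u B -> Rabs (u i) <= B.
Proof.
  intros H; eapply Rle_trans; [|apply (H (S i))]; simpl.
  pose proof (sum_lt_ge0 (fun j => Rabs (u j)) i (fun j => Rabs_pos (u j))); lra.
Qed.

Lemma l1_bounded_by_bounded u B : l1_bounded_by u B -> bounded u.
Proof. intros H; exists B; intros; eapply l1_bounded_by_Rabs_le, H. Qed.

Lemma l1_bounded_by_c0 u B : l1_bounded_by u B -> in_c0 u.
Proof. intros H; apply is_lim_seq_abs_0, ex_series_lim_0, (in_l1_of_bounded_by u B H). Qed.

Lemma l1_bounded_by_weaken u B B' : l1_bounded_by u B -> B <= B' -> l1_bounded_by u B'.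
Proof. intros H HB m; specialize (H m); lra. Qed.

Lemma l1_bounded_by_add u v A B : l1_bounded_by u A -> l1_bounded_by v B -> l1_bounded_by (sadd u v) (A + B).
Proof.
  intros HA HB m; unfold sadd.
  eapply Rle_trans; [apply sum_lt_le; intros i _; apply Rabs_triang|].
  rewrite sum_lt_plus; specialize (HA m); specialize (HB m); lra.
Qed.

Lemma l1_bounded_by_sub u v A B : l1_bounded_by u A -> l1_bounded_by v B -> l1_bounded_by (ssub u v) (A + B).
Proof.
  intros HA HB m; unfold ssub.
  eapply Rle_trans; [apply sum_lt_le; intros i _; apply Rabs_triang|].
  rewrite sum_lt_plus, (sum_lt_ext (fun i => Rabs (- v i)) (fun i => Rabs (v i))) by (intros; apply Rabs_Ropp).
  specialize (HA m); specialize (HB m); lra.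
Qed.

Lemma l1_bounded_by_scal c u A : l1_bounded_by u A -> l1_bounded_by (sscal c u) (Rabs c * A).
Proof.
  intros HA m; unfold sscal.
  rewrite (sum_lt_ext _ (fun i => Rabs c * Rabs (u i))) by (intros; apply Rabs_mult).
  rewrite sum_lt_scal; apply Rmult_le_compat_l; auto using Rabs_pos.
Qed.

Lemma l1_bounded_by_vsum f b n : (forall k, (k < n)%nat -> l1_bounded_by (f k) (b k)) ->
  l1_bounded_by (vsum f n) (sum_lt b n).
Proof.
  induction n as [|n IH]; intros H.
  - intros m; unfold vsum; simpl.
    rewrite (sum_lt_ext _ (fun _ => 0)), sum_lt_const by (intros; apply Rabs_R0); lra.
  - apply (l1_bounded_by_add (vsum f n) (f n)); [apply IH; intros|]; apply H; lia.
Qed.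

Section DunfordSchwartzL1.

Variable T : seqR -> seqR.
Hypothesis HT : dunford_schwartz T.

Lemma ds_l1_bounded_by u B : l1_bounded_by u B -> l1_bounded_by (T u) B.
Proof.
  intros H; destruct HT as [_ [Hl1 _]].
  destruct (Hl1 u (in_l1_of_bounded_by u B H)) as [HTu Hnorm].
  intros m; eapply Rle_trans; [apply l1_bounded_by_l1_norm, HTu|].
  eapply Rle_trans; [apply Hnorm|apply l1_norm_le, H].
Qed.

Lemma iter_l1_bounded_by k u B : l1_bounded_by u B -> l1_bounded_by (Nat.iter k T u) B.
Proof. intros H; induction k; simpl; auto using ds_l1_bounded_by. Qed.

Lemma avg_l1_bounded_by u n B : l1_bounded_by u B -> (0 < n)%nat -> l1_bounded_by (avg T u n) B.
Proof.
  intros H Hn; assert (0 < INR n) by (apply lt_0_INR; auto).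
  eapply l1_bounded_by_weaken.
  - apply l1_bounded_by_scal, (l1_bounded_by_vsum _ (fun _ => B)).
    intros; apply iter_l1_bounded_by, H.
  - rewrite sum_lt_const, Rabs_right by (left; apply Rinv_0_lt_compat; auto).
    right; field; lra.
Qed.

End DunfordSchwartzL1.

(** * Dunford-Schwartz operators contract l_2 *)

Definition unit_vec (j : nat) : seqR := fun i => if Nat.eqb i j then 1 else 0.
Definition trunc (z : seqR) (n : nat) : seqR := fun i => if Nat.ltb i n then z i else 0.
Definition tail_from (z : seqR) (n : nat) : seqR := fun i => if Nat.ltb i n then 0 else z i.

Lemma trunc_add_tail z n : sadd (trunc z n) (tail_from z n) = z.
Proof. apply functional_extensionality; intros i; unfold sadd, trunc, tail_from; destruct (Nat.ltb i n); ring. Qed.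

Lemma trunc_S z n : trunc z (S n) = sadd (trunc z n) (sscal (z n) (unit_vec n)).
Proof.
  apply functional_extensionality; intros i; unfold trunc, sadd, sscal, unit_vec.
  destruct (Nat.ltb_spec i (S n)), (Nat.ltb_spec i n), (Nat.eqb_spec i n); subst; try lia; ring.
Qed.

Lemma unit_vec_bounded j : bounded (unit_vec j).
Proof. exists 1; intros i; unfold unit_vec; destruct (Nat.eqb i j); rewrite ?Rabs_R1, ?Rabs_R0; lra. Qed.

Lemma trunc_bounded z n : bounded (trunc z n).
Proof.
  induction n; [exists 0; intros; unfold trunc; simpl; rewrite Rabs_R0; lra|].
  rewrite trunc_S; apply bounded_add, bounded_scal, unit_vec_bounded; auto.
Qed.

Lemma l1_bounded_by_unit_vec j : l1_bounded_by (unit_vec j) 1.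
Proof.
  intros m; replace (sum_lt _ m) with (if Nat.leb m j then 0 else 1); [destruct (Nat.leb m j); lra|].
  induction m as [|m IH]; simpl sum_lt; [reflexivity|]; rewrite <- IH; unfold unit_vec.
  destruct (Nat.leb_spec m j), (Nat.leb_spec (S m) j), (Nat.eqb_spec m j); subst; try lia;
    rewrite ?Rabs_R0, ?Rabs_R1; ring.
Qed.

Lemma l1_bounded_by_trunc z n : l1_bounded_by (trunc z n) (sum_lt (fun i => Rabs (z i)) n).
Proof.
  intros m; eapply Rle_trans; [apply (sum_lt_mono _ m (n + m)); [intros; apply Rabs_pos|lia]|].
  rewrite sum_lt_add_range, (sum_lt_ext (fun k => Rabs (trunc z n (n + k)%nat)) (fun _ => 0)).
  - rewrite sum_lt_const, Rmult_0_r, Rplus_0_r; right; apply sum_lt_ext; intros i Hi; unfold trunc.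
    destruct (Nat.ltb_spec i n); [reflexivity|lia].
  - intros k _; unfold trunc; destruct (Nat.ltb_spec (n + k) n); [lia|apply Rabs_R0].
Qed.

Lemma l1_bounded_by_trunc_le z n B : l1_bounded_by z B -> l1_bounded_by (trunc z n) B.
Proof. intros H; apply (l1_bounded_by_weaken _ _ _ (l1_bounded_by_trunc z n) (H n)). Qed.

Lemma l1_tail_small z B d : l1_bounded_by z B -> 0 < d -> exists n, l1_bounded_by (tail_from z n) d.
Proof.
  intros Hz Hd; set (a := fun i => Rabs (z i)).
  destruct (real_Lub_approx (fun t => exists m, t = sum_lt a m) d) as [t [[n ->] Hn]];
    [exists 0, 0%nat; reflexivity|exact Hd|].
  exists n; intros m.
  assert (Hsup : sum_lt a (n + m) <= real (Lub_Rbar (fun t => exists m, t = sum_lt a m)))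
    by (apply le_real_Lub; [exists B; intros t [k ->]; apply Hz|eauto]).
  rewrite sum_lt_add_range in Hsup.
  eapply Rle_trans; [apply (sum_lt_mono _ m (n + m)); [intros; apply Rabs_pos|lia]|].
  rewrite sum_lt_add_range, (sum_lt_ext _ (fun _ => 0)), sum_lt_const.
  - rewrite (sum_lt_ext _ (fun k => a (n + k)%nat)); [lra|].
    intros k _; unfold tail_from, a; destruct (Nat.ltb_spec (n + k) n); [lia|reflexivity].
  - intros i Hi; unfold tail_from; destruct (Nat.ltb_spec i n); [apply Rabs_R0|lia].
Qed.

Definition l2sq_bounded_by (u : seqR) (C : R) : Prop := forall m, sum_lt (fun i => u i ^ 2) m <= C.

Lemma sq_weighted_sum_le w a n : (forall j, 0 <= w j) -> sum_lt w n <= 1 ->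
  (sum_lt (fun j => w j * a j) n) ^ 2 <= sum_lt (fun j => w j * a j ^ 2) n.
Proof.
  intros Hw HS; set (M := sum_lt (fun j => w j * a j) n).
  assert (Hvar : 0 <= sum_lt (fun j => w j * (a j - M) ^ 2) n)
    by (apply sum_lt_ge0; intros j; apply Rmult_le_pos; auto; apply pow2_ge_0).
  rewrite (sum_lt_ext _ (fun j => (w j * a j ^ 2 + (-2 * M) * (w j * a j)) + M ^ 2 * w j)) in Hvar
    by (intros; ring).
  rewrite !sum_lt_plus, !sum_lt_scal in Hvar; fold M in Hvar.
  assert (0 <= sum_lt w n) by (apply sum_lt_ge0; auto).
  assert (M ^ 2 * sum_lt w n <= M ^ 2) by (assert (0 <= M ^ 2) by nra; nra).
  nra.
Qed.

Lemma sq_signed_sum_le c z n : sum_lt (fun j => Rabs (c j)) n <= 1 ->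
  (sum_lt (fun j => c j * z j) n) ^ 2 <= sum_lt (fun j => Rabs (c j) * z j ^ 2) n.
Proof.
  intros H; set (a := fun j => if Rle_dec 0 (c j) then z j else - z j).
  rewrite (sum_lt_ext (fun j => c j * z j) (fun j => Rabs (c j) * a j)).
  rewrite (sum_lt_ext (fun j => Rabs (c j) * z j ^ 2) (fun j => Rabs (c j) * a j ^ 2)).
  - apply sq_weighted_sum_le; auto; intros; apply Rabs_pos.
  - intros j _; unfold a; destruct (Rle_dec 0 (c j)); ring.
  - intros j _; unfold a; destruct (Rle_dec 0 (c j));
      [rewrite Rabs_right|rewrite Rabs_left]; lra.
Qed.

Lemma sum_sq_add_small u e K d m : (forall i, Rabs (u i) <= K) -> l1_bounded_by e d -> d <= 1 ->
  sum_lt (fun i => (u i + e i) ^ 2) m <= sum_lt (fun i => u i ^ 2) m + (2 * K + 1) * d.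
Proof.
  intros Hu He Hd.
  apply Rle_trans with (sum_lt (fun i => u i ^ 2 + (2 * K + 1) * Rabs (e i)) m).
  - apply sum_lt_le; intros i _.
    assert (Hei : Rabs (e i) <= d) by (apply l1_bounded_by_Rabs_le, He).
    specialize (Hu i).
    assert (Rabs (2 * u i + e i) <= 2 * K + 1)
      by (eapply Rle_trans; [apply Rabs_triang|rewrite Rabs_mult, Rabs_right by lra; lra]).
    assert (e i * (2 * u i + e i) <= Rabs (e i) * (2 * K + 1))
      by (eapply Rle_trans; [apply Rle_abs|rewrite Rabs_mult; apply Rmult_le_compat_l; auto using Rabs_pos]).
    replace ((u i + e i) ^ 2) with (u i ^ 2 + e i * (2 * u i + e i)) by ring; lra.
  - assert (0 <= K) by (pose proof (Hu 0%nat); pose proof (Rabs_pos (u 0%nat)); lra).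
    rewrite sum_lt_plus, sum_lt_scal; specialize (He m); nra.
Qed.

Lemma l2sq_bounded_by_add_small u e K C d : (forall i, Rabs (u i) <= K) -> l2sq_bounded_by u C ->
  l1_bounded_by e d -> d <= 1 -> l2sq_bounded_by (sadd u e) (C + (2 * K + 1) * d).
Proof. intros Hu HC He Hd m; unfold sadd; eapply Rle_trans; [apply sum_sq_add_small; eauto|]; specialize (HC m); lra. Qed.

Lemma exists_small_radius K eps : 0 <= K -> 0 < eps -> exists d, 0 < d /\ d <= 1 /\ (2 * K + 1) * d <= eps.
Proof.
  intros HK He; exists (Rmin 1 (eps / (2 * K + 1))); split; [|split; [apply Rmin_l|]].
  - apply Rmin_glb_lt; [lra|apply Rdiv_lt_0_compat; lra].
  - apply Rle_trans with ((2 * K + 1) * (eps / (2 * K + 1))); [apply Rmult_le_compat_l; [lra|apply Rmin_r]|].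
    right; field; lra.
Qed.

Lemma l2sq_bounded_by_of_l1 u B : l1_bounded_by u B -> l2sq_bounded_by u (B * B).
Proof.
  intros H m; pose proof (l1_bound_ge0 _ _ H) as HB.
  apply Rle_trans with (sum_lt (fun i => B * Rabs (u i)) m).
  - apply sum_lt_le; intros i _; pose proof (l1_bounded_by_Rabs_le u B i H).
    pose proof (Rabs_pos (u i)); rewrite <- (pow2_abs (u i)); nra.
  - rewrite sum_lt_scal; apply Rmult_le_compat_l; auto.
Qed.

Section DunfordSchwartzL2.

Variable T : seqR -> seqR.
Hypothesis HT : dunford_schwartz T.

Lemma ds_trunc z n i : T (trunc z n) i = sum_lt (fun j => z j * T (unit_vec j) i) n.
Proof.
  induction n as [|n IH].
  - replace (trunc z 0) with szero by (apply functional_extensionality; reflexivity).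
    rewrite ds_zero; auto.
  - rewrite trunc_S, ds_add, ds_scal; auto using trunc_bounded, unit_vec_bounded, bounded_scal.
    unfold sadd, sscal; simpl; rewrite IH; reflexivity.
Qed.

(* Apply the l_infty contraction to the signs of row [i] of the matrix of [T]. *)
Lemma ds_row_sum_le i n : sum_lt (fun j => Rabs (T (unit_vec j) i)) n <= 1.
Proof.
  set (s := fun j => if Rle_dec 0 (T (unit_vec j) i) then 1 else -1).
  assert (Hs : forall j, (j < n)%nat -> s j * T (unit_vec j) i = Rabs (T (unit_vec j) i)).
  { intros j _; unfold s; destruct (Rle_dec 0 (T (unit_vec j) i));
      [rewrite Rabs_right|rewrite Rabs_left]; lra. }
  assert (H1 : Rabs (T (trunc s n) i) <= 1).
  { apply ds_Rabs_le; auto using trunc_bounded; intros l; unfold trunc, s.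
    destruct (Nat.ltb l n); [destruct (Rle_dec _ _); apply Rabs_le; lra|rewrite Rabs_R0; lra]. }
  rewrite ds_trunc, (sum_lt_ext _ _ _ Hs), Rabs_right in H1; auto.
  apply Rle_ge, sum_lt_ge0; intros; apply Rabs_pos.
Qed.

Lemma ds_col_sum_le j m : sum_lt (fun i => Rabs (T (unit_vec j) i)) m <= 1.
Proof. apply ds_l1_bounded_by, l1_bounded_by_unit_vec; auto. Qed.

(* Schur test. *)
Lemma ds_l2sq_trunc z n C : l2sq_bounded_by z C -> l2sq_bounded_by (T (trunc z n)) C.
Proof.
  intros Hz m.
  rewrite (sum_lt_ext _ (fun i => (sum_lt (fun j => T (unit_vec j) i * z j) n) ^ 2))
    by (intros i _; rewrite ds_trunc; f_equal; apply sum_lt_ext; intros; ring).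
  eapply Rle_trans; [apply sum_lt_le; intros i _; apply sq_signed_sum_le, ds_row_sum_le|].
  rewrite sum_lt_swap; eapply Rle_trans; [|apply (Hz n)]; apply sum_lt_le; intros j _.
  rewrite (sum_lt_ext _ (fun i => z j ^ 2 * Rabs (T (unit_vec j) i))), sum_lt_scal by (intros; ring).
  pose proof (ds_col_sum_le j m); pose proof (pow2_ge_0 (z j)); nra.
Qed.

(* The truncations of [z] converge to [z] in l_1, and [T] is an l_1 contraction. *)
Lemma ds_l2sq_bounded_by z B C : l1_bounded_by z B -> l2sq_bounded_by z C -> l2sq_bounded_by (T z) C.
Proof.
  intros Hz HC m; apply Rle_plus_epsilon; intros eps He.
  destruct (exists_small_radius B eps (l1_bound_ge0 _ _ Hz) He) as [d [Hd0 [Hd1 Hd]]].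
  destruct (l1_tail_small z B d Hz Hd0) as [n Hn].
  rewrite <- (trunc_add_tail z n), ds_add by eauto using trunc_bounded, l1_bounded_by_bounded.
  eapply Rle_trans; [apply (l2sq_bounded_by_add_small _ _ B C d); auto|lra].
  - intros i; apply (l1_bounded_by_Rabs_le _ B), ds_l1_bounded_by, l1_bounded_by_trunc_le; auto.
  - apply ds_l2sq_trunc, HC.
  - apply ds_l1_bounded_by, Hn; auto.
Qed.

Lemma iter_l2sq_bounded_by k z B C : l1_bounded_by z B -> l2sq_bounded_by z C ->
  l2sq_bounded_by (Nat.iter k T z) C.
Proof.
  intros Hz HC; induction k; simpl; [auto|].
  apply (ds_l2sq_bounded_by _ B); auto using iter_l1_bounded_by.
Qed.

Lemma avg_l2sq_bounded_by z n B C : l1_bounded_by z B -> l2sq_bounded_by z C -> (0 < n)%nat ->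
  l2sq_bounded_by (avg T z n) C.
Proof.
  intros Hz HC Hn m; assert (Hn' : 0 < INR n) by (apply lt_0_INR; auto).
  unfold avg, sscal, vsum.
  apply Rle_trans with (sum_lt (fun i => sum_lt (fun k => / INR n * Nat.iter k T z i ^ 2) n) m).
  - apply sum_lt_le; intros i _; rewrite <- sum_lt_scal; apply sq_weighted_sum_le.
    + intros; left; apply Rinv_0_lt_compat; auto.
    + rewrite sum_lt_const; right; field; lra.
  - rewrite sum_lt_swap; apply Rle_trans with (sum_lt (fun _ => / INR n * C) n).
    + apply sum_lt_le; intros k _; rewrite sum_lt_scal.
      apply Rmult_le_compat_l; [left; apply Rinv_0_lt_compat; auto|].
      apply (iter_l2sq_bounded_by k z B C Hz HC).
    + rewrite sum_lt_const; right; field; lra.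
Qed.

End DunfordSchwartzL2.

Definition l2sq (u : seqR) : R := real (Lub_Rbar (fun t => exists m, t = sum_lt (fun i => u i ^ 2) m)).

Lemma l2sq_bounded_by_l2sq u C : l2sq_bounded_by u C -> l2sq_bounded_by u (l2sq u).
Proof. intros H m; apply le_real_Lub; [exists C; intros t [k ->]; apply H|exists m; auto]. Qed.

Lemma l2sq_le u C : l2sq_bounded_by u C -> l2sq u <= C.
Proof. intros H; apply real_Lub_le; [exists (sum_lt (fun i => u i ^ 2) 0), 0%nat|intros t [k ->]]; auto. Qed.

Lemma l2sq_ge0 u C : l2sq_bounded_by u C -> 0 <= l2sq u.
Proof. intros H; apply (l2sq_bounded_by_l2sq u C H 0%nat). Qed.

Lemma l2sq_approx u e : 0 < e -> exists m, l2sq u - e < sum_lt (fun i => u i ^ 2) m.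
Proof.
  intros He; destruct (real_Lub_approx (fun t => exists m, t = sum_lt (fun i => u i ^ 2) m) e)
    as [t [[m ->] Hm]]; [exists 0, 0%nat; reflexivity|exact He|].
  exists m; exact Hm.
Qed.

(** * Uniform convergence of the averages *)

Lemma l2sq_le_of_l1_close u v K C d : (forall i, Rabs (u i) <= K) -> l2sq_bounded_by u C ->
  l1_bounded_by (ssub v u) d -> d <= 1 -> l2sq v <= C + (2 * K + 1) * d.
Proof.
  intros Hu HC Hd Hd1.
  replace v with (sadd u (ssub v u)) by (apply functional_extensionality; intros; unfold sadd, ssub; ring).
  apply l2sq_le, l2sq_bounded_by_add_small; auto.
Qed.

(* Uniform convexity of l_2, through the parallelogram identity. *)
Lemma sq_sub_le_of_midpoint u v r eta : l2sq_bounded_by u (r + eta) -> l2sq_bounded_by v (r + eta) ->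
  r <= l2sq (sscal (/ 2) (sadd u v)) -> 0 < eta -> forall i, (u i - v i) ^ 2 <= 8 * eta.
Proof.
  intros Hu Hv Hr He i; set (w := sscal (/ 2) (sadd u v)) in *.
  destruct (l2sq_approx w eta He) as [m0 Hm0].
  set (m := max (S i) m0); set (dd := fun j => ((u j - v j) / 2) ^ 2).
  assert (Hi : dd i <= sum_lt dd m).
  { eapply Rle_trans; [|apply (sum_lt_mono dd (S i) m); [intros; apply pow2_ge_0|lia]].
    simpl; pose proof (sum_lt_ge0 dd i (fun j => pow2_ge_0 _)); lra. }
  assert (Hpar : sum_lt dd m = sum_lt (fun j => u j ^ 2) m / 2 + sum_lt (fun j => v j ^ 2) m / 2
                              - sum_lt (fun j => w j ^ 2) m).
  { unfold Rdiv; rewrite !(Rmult_comm _ (/ 2)), <- !sum_lt_scal, <- sum_lt_plus, <- sum_lt_minus.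
    apply sum_lt_ext; intros j _; unfold dd, w, sscal, sadd; field. }
  assert (sum_lt (fun j => w j ^ 2) m0 <= sum_lt (fun j => w j ^ 2) m)
    by (apply sum_lt_mono; [intros; apply pow2_ge_0|lia]).
  specialize (Hu m); specialize (Hv m).
  replace ((u i - v i) ^ 2) with (4 * dd i) by (unfold dd; field); lra.
Qed.

Lemma eventually_ratio_le c eta : 0 < eta -> exists N0, forall N, (N0 <= N)%nat -> c / INR (S N) <= eta.
Proof.
  intros He; destruct (INR_archimed eta c He) as [N0 H]; exists N0; intros N HN.
  assert (INR N0 <= INR (S N)) by (apply le_INR; lia).
  assert (0 < INR (S N)) by (apply lt_0_INR; lia).
  apply Rmult_le_reg_r with (INR (S N)); auto.
  unfold Rdiv; rewrite Rmult_assoc, Rinv_l by lra; nra.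
Qed.

Section MeanErgodic.

Variable T : seqR -> seqR.
Hypothesis HT : dunford_schwartz T.

Lemma iter_avg k y n : bounded y -> forall i,
  Nat.iter k T (avg T y n) i = / INR n * sum_lt (fun j => Nat.iter (k + j) T y i) n.
Proof.
  intros Hy i; unfold avg.
  rewrite iter_scal, iter_vsum; auto using bounded_vsum, iter_bounded.
  unfold sscal, vsum; f_equal; apply sum_lt_ext; intros; rewrite Nat.iter_add; reflexivity.
Qed.

Lemma avg_avg_sub y n k : bounded y -> (0 < n)%nat -> (0 < k)%nat ->
  ssub (avg T y k) (avg T (avg T y n) k) =
  sscal (/ INR n) (vsum (fun j => sscal (/ INR k)
    (ssub (vsum (fun l => Nat.iter l T y) j) (vsum (fun l => Nat.iter (k + l) T y) j))) n).
Proof.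
  intros Hy Hn Hk; assert (0 < INR n) by (apply lt_0_INR; auto).
  assert (0 < INR k) by (apply lt_0_INR; auto).
  apply functional_extensionality; intros i.
  set (S := fun j => sum_lt (fun l => Nat.iter l T y i) j).
  set (R := fun j => sum_lt (fun l => Nat.iter (k + l) T y i) j).
  assert (Hleft : avg T (avg T y n) k i = / INR k * (/ INR n * (INR n * S k + sum_lt R n - sum_lt S n))).
  { change (avg T (avg T y n) k i) with (/ INR k * sum_lt (fun l => Nat.iter l T (avg T y n) i) k).
    rewrite (sum_lt_ext _ (fun l => / INR n * sum_lt (fun j => Nat.iter (l + j) T y i) n))
      by (intros; apply iter_avg, Hy).
    rewrite sum_lt_scal, (sum_lt_swap (fun l j => Nat.iter (l + j) T y i)).
    rewrite (sum_lt_ext _ (fun j => S k + (R j - S j)))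
      by (intros j _; unfold S, R; rewrite (sum_lt_shift (fun l => Nat.iter l T y i)); ring).
    rewrite sum_lt_plus, sum_lt_minus, sum_lt_const; ring. }
  transitivity (/ INR n * sum_lt (fun j => / INR k * (S j - R j)) n); [|reflexivity].
  unfold ssub at 1; rewrite Hleft, sum_lt_scal, sum_lt_minus.
  change (avg T y k i) with (/ INR k * S k); field; lra.
Qed.

Lemma avg_avg_l1_close y Y n k : l1_bounded_by y Y -> (0 < n)%nat -> (0 < k)%nat ->
  l1_bounded_by (ssub (avg T y k) (avg T (avg T y n) k)) (2 * INR n * Y / INR k).
Proof.
  intros Hy Hn Hk; assert (0 < INR n) by (apply lt_0_INR; auto).
  assert (0 < INR k) by (apply lt_0_INR; auto).
  assert (HY := l1_bound_ge0 _ _ Hy).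
  rewrite avg_avg_sub by eauto using l1_bounded_by_bounded.
  eapply l1_bounded_by_weaken.
  - apply l1_bounded_by_scal, (l1_bounded_by_vsum _ (fun _ => / INR k * (2 * INR n * Y))).
    intros j Hj; eapply l1_bounded_by_weaken; [apply l1_bounded_by_scal, l1_bounded_by_sub|].
    + apply (l1_bounded_by_vsum _ (fun _ => Y)); intros; apply iter_l1_bounded_by; auto.
    + apply (l1_bounded_by_vsum _ (fun _ => Y)); intros; apply iter_l1_bounded_by; auto.
    + rewrite !sum_lt_const, Rabs_right by (left; apply Rinv_0_lt_compat; auto).
      assert (INR j <= INR n) by (apply le_INR; lia).
      apply Rmult_le_compat_l; [left; apply Rinv_0_lt_compat; auto|nra].
  - rewrite sum_lt_const, Rabs_right by (left; apply Rinv_0_lt_compat; auto).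
    right; field; lra.
Qed.

Variables (y : seqR) (Y : R).
Hypothesis Hy : l1_bounded_by y Y.

Definition avg_l2sq_inf : R := real (Glb_Rbar (fun t => exists N, t = l2sq (avg T y (S N)))).

Lemma avg_l1 N : l1_bounded_by (avg T y (S N)) Y.
Proof. apply avg_l1_bounded_by; auto; lia. Qed.

Lemma avg_l2sq N : l2sq_bounded_by (avg T y (S N)) (l2sq (avg T y (S N))).
Proof. apply (l2sq_bounded_by_l2sq _ (Y * Y)), l2sq_bounded_by_of_l1, avg_l1. Qed.

Lemma avg_l2sq_inf_le N : avg_l2sq_inf <= l2sq (avg T y (S N)).
Proof.
  apply real_Glb_le; [exists 0; intros t [k ->]|exists N; reflexivity].
  apply (l2sq_ge0 _ _ (avg_l2sq k)).
Qed.

(* Averaging [avg T y (S M)] again gives a later average of [y] up to a small l_1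
   error, and averaging does not increase the l_2 norm. *)
Lemma avg_l2sq_eventually_near_inf eta : 0 < eta ->
  exists N1, forall N, (N1 <= N)%nat -> l2sq (avg T y (S N)) <= avg_l2sq_inf + eta.
Proof.
  intros He; assert (HY := l1_bound_ge0 _ _ Hy).
  destruct (real_Glb_approx (fun t => exists N, t = l2sq (avg T y (S N))) (eta / 2))
    as [t [[M ->] HM]]; [exists (l2sq (avg T y 1)), 0%nat; reflexivity|lra|].
  destruct (exists_small_radius Y (eta / 2) HY ltac:(lra)) as [d [Hd0 [Hd1 Hd]]].
  destruct (eventually_ratio_le (2 * INR (S M) * Y) d Hd0) as [N1 HN1].
  exists N1; intros N HN.
  eapply Rle_trans; [apply (l2sq_le_of_l1_close (avg T (avg T y (S M)) (S N)) _ Y (l2sq (avg T y (S M))) d)|].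
  - intros; apply (l1_bounded_by_Rabs_le _ Y); apply avg_l1_bounded_by; auto using avg_l1; lia.
  - apply (avg_l2sq_bounded_by _ HT _ _ Y); [apply avg_l1|apply avg_l2sq|lia].
  - eapply l1_bounded_by_weaken; [apply avg_avg_l1_close; eauto; lia|apply HN1, HN].
  - exact Hd1.
  - unfold avg_l2sq_inf in *; lra.
Qed.

Lemma avg_l2sq_inf_le_midpoint N N' :
  avg_l2sq_inf <= l2sq (sscal (/ 2) (sadd (avg T y (S N)) (avg T y (S N')))).
Proof.
  assert (HY := l1_bound_ge0 _ _ Hy).
  set (w := sscal (/ 2) (sadd (avg T y (S N)) (avg T y (S N')))).
  assert (Lw : l1_bounded_by w Y).
  { eapply l1_bounded_by_weaken; [apply l1_bounded_by_scal, l1_bounded_by_add; apply avg_l1|].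
    rewrite Rabs_right; lra. }
  apply Rle_plus_epsilon; intros eps He.
  destruct (exists_small_radius Y eps HY He) as [d [Hd0 [Hd1 Hd]]].
  set (c := INR (S N) * Y + INR (S N') * Y).
  destruct (eventually_ratio_le c d Hd0) as [K HK]; specialize (HK K (le_n _)).
  assert (Hclose : l1_bounded_by (ssub (avg T y (S K)) (avg T w (S K))) (c / INR (S K))).
  { replace (ssub (avg T y (S K)) (avg T w (S K))) with (sscal (/ 2)
      (sadd (ssub (avg T y (S K)) (avg T (avg T y (S N)) (S K)))
            (ssub (avg T y (S K)) (avg T (avg T y (S N')) (S K))))).
    - eapply l1_bounded_by_weaken; [apply l1_bounded_by_scal, l1_bounded_by_add; apply avg_avg_l1_close; eauto; lia|].
      rewrite Rabs_right by lra; right; unfold c; field; apply not_0_INR; lia.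
    - unfold w; rewrite avg_scal, avg_add; eauto using l1_bounded_by_bounded, bounded_add, avg_l1.
      apply functional_extensionality; intros; unfold ssub, sscal, sadd; field. }
  pose proof (avg_l2sq_inf_le K).
  assert (l2sq (avg T y (S K)) <= l2sq w + (2 * Y + 1) * d); [|lra].
  apply (l2sq_le_of_l1_close (avg T w (S K))).
  - intros; apply (l1_bounded_by_Rabs_le _ Y); apply avg_l1_bounded_by; auto; lia.
  - apply (avg_l2sq_bounded_by _ HT _ _ Y); [exact Lw|apply (l2sq_bounded_by_l2sq _ _ (l2sq_bounded_by_of_l1 _ _ Lw))|lia].
  - eapply l1_bounded_by_weaken; [exact Hclose|exact HK].
  - exact Hd1.
Qed.

Lemma avg_uniformly_cauchy_l1 eps : 0 < eps -> exists N0, forall N N', (N0 <= N)%nat -> (N0 <= N')%nat ->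
  forall i, Rabs (avg T y (S N) i - avg T y (S N') i) <= eps.
Proof.
  intros He; assert (Heta : 0 < eps ^ 2 / 8) by nra.
  destruct (avg_l2sq_eventually_near_inf _ Heta) as [N0 HN0].
  exists N0; intros N N' HN HN' i.
  assert (Hsq : (avg T y (S N) i - avg T y (S N') i) ^ 2 <= 8 * (eps ^ 2 / 8)).
  { apply (sq_sub_le_of_midpoint _ _ avg_l2sq_inf); auto using avg_l2sq_inf_le_midpoint.
    - intros m; eapply Rle_trans; [apply avg_l2sq|auto].
    - intros m; eapply Rle_trans; [apply avg_l2sq|auto]. }
  apply Rabs_le; split; nra.
Qed.

End MeanErgodic.

Definition uniformly_cauchy (a : nat -> seqR) : Prop :=
  forall eps, 0 < eps -> exists N0, forall N N', (N0 <= N)%nat -> (N0 <= N')%nat ->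
    forall i, Rabs (a N i - a N' i) <= eps.

Definition converges_uniformly (a : nat -> seqR) (l : seqR) : Prop :=
  forall eps, 0 < eps -> exists N0, forall N, (N0 <= N)%nat -> forall i, Rabs (a N i - l i) <= eps.

Lemma uniformly_cauchy_converges a : uniformly_cauchy a -> exists l, converges_uniformly a l.
Proof.
  intros Ha.
  assert (Hlim : forall i, exists l : R, is_lim_seq (fun N => a N i) l).
  { intros i; apply (proj2 (ex_lim_seq_cauchy_corr (fun N => a N i))); intros [e He].
    destruct (Ha (e / 2)) as [N0 HN0]; [lra|].
    exists N0; intros n m Hn Hm; specialize (HN0 n m Hn Hm i); simpl; lra. }
  exists (fun i => proj1_sig (constructive_indefinite_description _ (Hlim i))).
  intros eps He; destruct (Ha eps He) as [N0 HN0]; exists N0; intros N HN i.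
  destruct (constructive_indefinite_description _ (Hlim i)) as [l Hl]; simpl.
  apply (is_lim_seq_le_loc (fun N' => Rabs (a N i - a N' i)) (fun _ => eps) (Rabs (a N i - l)) eps).
  - exists N0; intros N' HN'; apply HN0; auto.
  - apply (is_lim_seq_abs _ (a N i - l)), is_lim_seq_minus'; [apply is_lim_seq_const|exact Hl].
  - apply is_lim_seq_const.
Qed.

Lemma converges_uniformly_bounded a l : (forall N, bounded (a N)) -> converges_uniformly a l -> bounded l.
Proof.
  intros Hb Hl; destruct (Hl 1) as [N0 HN0]; [lra|].
  destruct (Hb N0) as [M HM]; exists (M + 1); intros i.
  specialize (HN0 N0 (le_n _) i); specialize (HM i).
  pose proof (Rabs_triang (l i - a N0 i) (a N0 i)); rewrite Rabs_minus_sym in HN0.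
  replace (l i - a N0 i + a N0 i) with (l i) in * by ring; lra.
Qed.

Lemma avg_uniformly_cauchy T x : dunford_schwartz T -> bounded x -> in_c0 x ->
  uniformly_cauchy (fun N => avg T x (S N)).
Proof.
  intros HT Hb Hc eps He; destruct (proj1 (in_c0_spec x) Hc (eps / 3)) as [n0 Hn0]; [lra|].
  assert (Htail : forall i, Rabs (tail_from x n0 i) <= eps / 3).
  { intros i; unfold tail_from; destruct (Nat.ltb_spec i n0); [rewrite Rabs_R0; lra|left; apply Hn0; lia]. }
  assert (Hbt : bounded (tail_from x n0)) by (exists (eps / 3); auto).
  destruct (avg_uniformly_cauchy_l1 T HT _ _ (l1_bounded_by_trunc x n0) (eps / 3)) as [N0 HN0]; [lra|].
  exists N0; intros N N' HN HN' i; simpl.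
  rewrite <- (trunc_add_tail x n0), !avg_add by auto using trunc_bounded; unfold sadd.
  specialize (HN0 N N' HN HN' i).
  pose proof (avg_Rabs_le T HT _ (S N) _ Hbt Htail ltac:(lia) i).
  pose proof (avg_Rabs_le T HT _ (S N') _ Hbt Htail ltac:(lia) i).
  set (a := avg T (trunc x n0) (S N) i - avg T (trunc x n0) (S N') i) in HN0.
  replace (_ - _) with (a + (avg T (tail_from x n0) (S N) i - avg T (tail_from x n0) (S N') i)) by (unfold a; ring).
  eapply Rle_trans; [apply Rabs_triang|].
  eapply Rle_trans; [apply Rplus_le_compat_l, Rabs_triang|]; rewrite Rabs_Ropp; lra.
Qed.

(** * Greedy rearrangement and majorization *)

Lemma exists_max_Rabs_below x F N : (exists m0, (m0 < N)%nat /\ ~ In m0 F) ->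
  exists i, (i < N)%nat /\ ~ In i F /\ forall m, (m < N)%nat -> ~ In m F -> Rabs (x m) <= Rabs (x i).
Proof.
  induction N as [|N IH]; intros [m0 [Hm0 Hm0F]]; [lia|].
  destruct (classic (exists m1, (m1 < N)%nat /\ ~ In m1 F)) as [Hex|Hnex].
  - destruct (IH Hex) as [i [Hi [HiF Him]]].
    destruct (classic (~ In N F /\ Rabs (x i) < Rabs (x N))) as [[HN Hlt]|Hnot].
    + exists N; repeat split; auto; intros m Hm HmF.
      destruct (Nat.eq_dec m N); [subst; lra|]; specialize (Him m ltac:(lia) HmF); lra.
    + exists i; repeat split; auto; intros m Hm HmF.
      destruct (Nat.eq_dec m N); [subst|apply Him; auto; lia].
      apply Rnot_lt_le; intros Hlt; apply Hnot; auto.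
  - assert (HN : ~ In N F).
    { destruct (Nat.eq_dec m0 N); [subst; auto|]; exfalso; apply Hnex; exists m0; split; auto; lia. }
    exists N; repeat split; auto; intros m Hm HmF.
    destruct (Nat.eq_dec m N); [subst; lra|]; exfalso; apply Hnex; exists m; split; auto; lia.
Qed.

Lemma c0_exists_max_outside x F : in_c0 x ->
  exists i, ~ In i F /\ forall m, ~ In m F -> Rabs (x m) <= Rabs (x i).
Proof.
  intros Hx; destruct (classic (exists m0, ~ In m0 F /\ x m0 <> 0)) as [[m0 [Hm0 Hx0]]|Hzero].
  - assert (Ha : 0 < Rabs (x m0)) by (apply Rabs_pos_lt; auto).
    destruct (proj1 (in_c0_spec x) Hx _ Ha) as [N HN].
    assert (Hm0N : (m0 < N)%nat) by (destruct (Nat.lt_ge_cases m0 N); auto; specialize (HN m0 H); lra).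
    destruct (exists_max_Rabs_below x F N) as [i [Hi [HiF Him]]]; [eauto|].
    exists i; split; auto; intros m HmF; destruct (Nat.lt_ge_cases m N); [apply Him; auto|].
    specialize (HN m H); specialize (Him m0 Hm0N Hm0); lra.
  - destruct (exists_not_In F) as [i Hi]; exists i; split; auto; intros m HmF.
    replace (x m) with 0 by (apply NNPP; intros Hxm; apply Hzero; eauto).
    rewrite Rabs_R0; apply Rabs_pos.
Qed.

Definition greedy_choice (x : seqR) (g : list nat -> nat) : Prop :=
  forall F, ~ In (g F) F /\ forall m, ~ In m F -> Rabs (x m) <= Rabs (x (g F)).

Lemma c0_greedy_choice x : in_c0 x -> exists g, greedy_choice x g.
Proof.
  intros Hx; exists (fun F => proj1_sig (constructive_indefinite_description _ (c0_exists_max_outside x F Hx))).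
  intros F; exact (proj2_sig (constructive_indefinite_description _ (c0_exists_max_outside x F Hx))).
Qed.

Fixpoint greedy_prefix (g : list nat -> nat) (n : nat) : list nat :=
  match n with O => nil | S n => g (greedy_prefix g n) :: greedy_prefix g n end.

Definition greedy_index (g : list nat -> nat) (n : nat) : nat := g (greedy_prefix g n).

Lemma greedy_prefix_length g n : length (greedy_prefix g n) = n.
Proof. induction n; simpl; auto. Qed.

Lemma greedy_prefix_incl g j n : (j <= n)%nat -> incl (greedy_prefix g j) (greedy_prefix g n).
Proof. intros H; induction H; [apply incl_refl|simpl; apply incl_tl; auto]. Qed.

Lemma In_greedy_prefix g n m : In m (greedy_prefix g n) -> exists j, (j < n)%nat /\ m = greedy_index g j.
Proof.
  induction n as [|n IH]; simpl; [tauto|]; intros [<-|Hm]; [exists n; split; auto|].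
  destruct (IH Hm) as [j [Hj ->]]; exists j; split; auto.
Qed.

Definition sum_list (f : nat -> R) (L : list nat) : R := fold_right (fun i acc => f i + acc) 0 L.

Lemma sum_list_greedy_prefix f g n : sum_list f (greedy_prefix g n) = sum_lt (fun j => f (greedy_index g j)) n.
Proof. induction n as [|n IH]; [reflexivity|]; unfold sum_list in *; simpl; rewrite IH; unfold greedy_index; ring. Qed.

Lemma sum_list_ext f h L : (forall i, In i L -> f i = h i) -> sum_list f L = sum_list h L.
Proof. induction L as [|a L IH]; simpl; intros H; auto; unfold sum_list in *; simpl; rewrite H, IH; auto. Qed.

Lemma sum_lt_remove f a m :
  sum_lt f m = sum_lt (fun i => if Nat.eqb i a then 0 else f i) m + (if Nat.ltb a m then f a else 0).
Proof.
  induction m as [|m IH]; simpl; [ring|]; rewrite IH.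
  destruct (Nat.eqb_spec m a), (Nat.ltb_spec a m), (Nat.ltb_spec a (S m)); subst; try lia; ring.
Qed.

Lemma sum_lt_le_sum_list L f m : NoDup L -> (forall i, 0 <= f i) -> (forall i, ~ In i L -> f i = 0) ->
  sum_lt f m <= sum_list f L.
Proof.
  revert f; induction L as [|a L IH]; intros f HL Hf Hz.
  - rewrite (sum_lt_ext _ (fun _ => 0)), sum_lt_const by (intros; apply Hz; auto); simpl; lra.
  - inversion HL; subst; set (f' := fun i => if Nat.eqb i a then 0 else f i).
    assert (Hf' : sum_lt f' m <= sum_list f' L).
    { apply IH; auto; intros i; unfold f'; destruct (Nat.eqb_spec i a); try lra; auto.
      intros Hi; apply Hz; simpl; intros [Heq|Hin]; [congruence|tauto]. }
    rewrite (sum_list_ext f' f) in Hf' by (intros i Hi; unfold f'; destruct (Nat.eqb_spec i a); subst; tauto).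
    rewrite (sum_lt_remove f a m); fold f'; unfold sum_list in *; simpl.
    destruct (Nat.ltb a m); specialize (Hf a); lra.
Qed.

Lemma sum_list_le L f B : NoDup L -> (forall i, 0 <= f i) -> (forall m, sum_lt f m <= B) -> sum_list f L <= B.
Proof.
  revert f B; induction L as [|a L IH]; intros f B HL Hf HB; [apply (HB 0%nat)|].
  inversion HL; subst; set (f' := fun i => if Nat.eqb i a then 0 else f i).
  assert (Hf' : sum_list f' L <= B - f a).
  { apply IH; auto; [intros i; unfold f'; destruct (Nat.eqb i a); auto; lra|].
    intros m; pose proof (sum_lt_remove f a m) as Hrem; fold f' in Hrem.
    destruct (Nat.ltb_spec a m); [specialize (HB m); lra|].
    assert (sum_lt f m <= sum_lt f a) by (apply sum_lt_mono; auto).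
    specialize (HB (S a)); simpl in HB; lra. }
  rewrite (sum_list_ext f' f) in Hf' by (intros i Hi; unfold f'; destruct (Nat.eqb_spec i a); subst; tauto).
  unfold sum_list in *; simpl; lra.
Qed.

Section Greedy.

Variables (x : seqR) (g : list nat -> nat).
Hypothesis Hg : greedy_choice x g.

Lemma greedy_prefix_NoDup n : NoDup (greedy_prefix g n).
Proof. induction n; simpl; constructor; auto; apply Hg. Qed.

Lemma greedy_Rabs_antitone j n : (j <= n)%nat -> Rabs (x (greedy_index g n)) <= Rabs (x (greedy_index g j)).
Proof.
  intros Hjn; apply (proj2 (Hg (greedy_prefix g j))); intros Hin.
  apply (greedy_prefix_incl g j n Hjn) in Hin; apply (proj1 (Hg (greedy_prefix g n))), Hin.
Qed.

(* A set of at most [n] indices misses one of the [n + 1] first greedy indices. *)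
Lemma rearr_greedy n : bounded x -> rearr x n = Rabs (x (greedy_index g n)).
Proof.
  intros Hb; apply Rle_antisym.
  - eapply Rle_trans; [apply (rearr_le_sup_outside _ _ (greedy_prefix g n)); auto|].
    + apply greedy_prefix_NoDup.
    + rewrite greedy_prefix_length; auto.
    + apply sup_outside_le, Hg.
  - apply le_rearr; intros F HF Hl.
    assert (Hex : exists j, (j < S n)%nat /\ ~ In (greedy_index g j) F).
    { apply NNPP; intros Hn.
      assert (Hincl : incl (greedy_prefix g (S n)) F).
      { intros m Hm; destruct (In_greedy_prefix g _ _ Hm) as [j [Hj ->]].
        apply NNPP; intros HjF; apply Hn; eauto. }
      apply NoDup_incl_length in Hincl; [|apply greedy_prefix_NoDup].
      rewrite greedy_prefix_length in Hincl; lia. }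
    destruct Hex as [j [Hj HjF]].
    eapply Rle_trans; [apply (greedy_Rabs_antitone j n); lia|apply Rabs_le_sup_outside; auto].
Qed.

End Greedy.

Definition clip (lam v : R) : R := Rmax (- lam) (Rmin lam v).

Lemma Rabs_clip_le lam v : 0 <= lam -> Rabs (clip lam v) <= lam.
Proof. intros; unfold clip, Rmax, Rmin, Rabs; repeat (destruct Rle_dec || destruct Rcase_abs); lra. Qed.

Lemma clip_id lam v : Rabs v <= lam -> clip lam v = v.
Proof. unfold clip, Rmax, Rmin, Rabs; repeat (destruct Rle_dec || destruct Rcase_abs); lra. Qed.

Lemma Rabs_sub_clip_le lam v : 0 <= lam -> lam <= Rabs v -> Rabs (v - clip lam v) <= Rabs v - lam.
Proof. unfold clip, Rmax, Rmin, Rabs; repeat (destruct Rle_dec || destruct Rcase_abs); lra. Qed.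

(* [x - clip x] is supported on the [k] greedy indices of largest modulus. *)
Lemma c0_split_at_rearr x k : bounded x -> in_c0 x -> exists x1 x2, x = sadd x1 x2 /\
  l1_bounded_by x1 (sum_lt (rearr x) k - INR k * rearr x k) /\ forall i, Rabs (x2 i) <= rearr x k.
Proof.
  intros Hb Hc; destruct (c0_greedy_choice x Hc) as [g Hg].
  set (lam := rearr x k); assert (Hlam : lam = Rabs (x (greedy_index g k))) by (apply rearr_greedy; auto).
  assert (Hlam0 : 0 <= lam) by (rewrite Hlam; apply Rabs_pos).
  set (x2 := fun i => clip lam (x i)); set (x1 := ssub x x2).
  exists x1, x2; split; [|split].
  - apply functional_extensionality; intros i; unfold sadd, x1, ssub; ring.
  - intros m; eapply Rle_trans; [apply (sum_lt_le_sum_list (greedy_prefix g k))|].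
    + apply (greedy_prefix_NoDup x g Hg).
    + intros; apply Rabs_pos.
    + intros i Hi; unfold x1, ssub, x2; rewrite clip_id, Rminus_diag, Rabs_R0; auto.
      rewrite Hlam; apply Hg, Hi.
    + rewrite sum_list_greedy_prefix, <- sum_lt_const, <- sum_lt_minus; apply sum_lt_le; intros j Hj.
      rewrite (rearr_greedy x g Hg j Hb); unfold x1, ssub, x2; apply Rabs_sub_clip_le; auto.
      rewrite Hlam; apply greedy_Rabs_antitone; auto; lia.
  - intros i; apply Rabs_clip_le, Hlam0.
Qed.

Lemma sum_rearr_le_l1_plus v z B c n : bounded v -> l1_bounded_by z B ->
  (forall i, Rabs (v i) <= Rabs (z i) + c) -> sum_lt (rearr v) n <= B + INR n * c.
Proof.
  intros Hv Hz Hvz; destruct (c0_greedy_choice z (l1_bounded_by_c0 _ _ Hz)) as [g Hg].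
  apply Rle_trans with (sum_lt (fun j => Rabs (z (greedy_index g j)) + c) n).
  - apply sum_lt_le; intros j _.
    eapply Rle_trans; [apply (rearr_le_sup_outside _ _ (greedy_prefix g j)); auto|].
    + apply (greedy_prefix_NoDup z g Hg).
    + rewrite greedy_prefix_length; auto.
    + apply sup_outside_le; intros m Hm; specialize (Hvz m).
      pose proof (proj2 (Hg (greedy_prefix g j)) m Hm); unfold greedy_index; lra.
  - rewrite sum_lt_plus, sum_lt_const, <- (sum_list_greedy_prefix (fun i => Rabs (z i))).
    apply Rplus_le_compat_r, sum_list_le; auto using Rabs_pos.
    apply (greedy_prefix_NoDup z g Hg).
Qed.

Lemma majorized_of_avg_limit T x xh : dunford_schwartz T -> bounded x -> in_c0 x -> bounded xh ->
  converges_uniformly (fun N => avg T x (S N)) xh -> majorized xh x.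
Proof.
  intros HT Hb Hc Hbh Hlim k; rewrite !sum_n_sum_lt.
  destruct (c0_split_at_rearr x k Hb Hc) as [x1 [x2 [Hx [Hx1 Hx2]]]].
  assert (Hbx2 : bounded x2) by (exists (rearr x k); auto).
  assert (Hbx1 : bounded x1) by eauto using l1_bounded_by_bounded.
  apply Rle_plus_epsilon; intros eta Heta.
  assert (HSk : 0 < INR (S k)) by (apply lt_0_INR; lia).
  destruct (Hlim (eta / INR (S k))) as [N HN]; [apply Rdiv_lt_0_compat; lra|].
  eapply Rle_trans.
  - apply (sum_rearr_le_l1_plus _ (avg T x1 (S N))
                 (sum_lt (rearr x) k - INR k * rearr x k) (rearr x k + eta / INR (S k))); auto.
    + apply avg_l1_bounded_by; eauto; lia.
    + intros i; specialize (HN N (le_n _) i); cbv beta in HN.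
      pose proof (avg_Rabs_le T HT x2 (S N) _ Hbx2 Hx2 ltac:(lia) i).
      rewrite Hx, avg_add in HN by auto; unfold sadd in HN.
      pose proof (Rabs_triang (xh i - (avg T x1 (S N) i + avg T x2 (S N) i))
                              (avg T x1 (S N) i + avg T x2 (S N) i)).
      pose proof (Rabs_triang (avg T x1 (S N) i) (avg T x2 (S N) i)).
      rewrite Rabs_minus_sym in HN; replace (xh i - _ + _) with (xh i) in * by ring; lra.
  - simpl sum_lt; rewrite S_INR in *; right; field; lra.
Qed.

Lemma converges_uniformly_linf a l : (forall N, bounded (a N)) -> bounded l ->
  converges_uniformly a l -> is_lim_seq (fun N => linf_norm (ssub (a N) l)) 0.
Proof.
  intros Ha Hl H; apply is_lim_seq_spec; intros [e He]; destruct (H (e / 2)) as [N0 HN0]; [lra|].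
  exists N0; intros N HN; simpl; rewrite Rminus_0_r, Rabs_pos_eq by (apply linf_norm_ge0, bounded_sub; auto).
  eapply Rle_lt_trans; [apply linf_norm_le; intros i; apply HN0; auto|lra].
Qed.

Lemma uniform_IET_of_c0 E normE : fully_symmetric_seq_space E normE ->
  (forall x, E x -> in_c0 x) -> uniform_IET_property E.
Proof.
  intros [[[Hbd _] _] Hfull] Hc0 x Ex T HT.
  assert (Hb : bounded x) by auto.
  assert (Hbavg : forall N, bounded (avg T x (S N))) by (intros; apply avg_bounded; auto).
  destruct (uniformly_cauchy_converges _ (avg_uniformly_cauchy T x HT Hb (Hc0 x Ex))) as [xh Hxh].
  assert (Hbh : bounded xh) by apply (converges_uniformly_bounded _ _ Hbavg Hxh).
  exists xh; split.
  - apply (Hfull xh x Hbh Ex), (majorized_of_avg_limit T); auto.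
  - apply (is_lim_seq_ext (fun N => linf_norm (ssub (avg T x (S N)) xh)));
      [intros; rewrite cesaro_avg; reflexivity|].
    apply converges_uniformly_linf; auto.
Qed.

Lemma not_c0_frequently_ge x : ~ in_c0 x -> exists e, 0 < e /\ forall N, exists m, (N <= m)%nat /\ e <= Rabs (x m).
Proof.
  intros Hn; apply NNPP; intros H; apply Hn, in_c0_spec; intros e He.
  apply NNPP; intros H2; apply H; exists e; split; auto; intros N.
  apply NNPP; intros H3; apply H2; exists N; intros m Hm.
  apply Rnot_le_lt; intros H4; apply H3; eauto.
Qed.

Lemma one_in_of_not_c0 E normE x : symmetric_seq_space E normE -> E x -> ~ in_c0 x -> E one_seq.
Proof.
  intros [[Hbd [_ [_ [_ [Hscal _]]]]] [Hsym _]] Ex Hn.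
  destruct (not_c0_frequently_ge x Hn) as [e [He Hfreq]].
  assert (Hb1 : bounded one_seq) by (exists 1; intros; unfold one_seq; rewrite Rabs_R1; lra).
  assert (Ey : E (sscal (/ e) x)) by auto.
  apply (Hsym one_seq (sscal (/ e) x) Ey Hb1); intros n; apply Rle_trans with 1.
  - eapply Rle_trans; [apply (rearr_le_sup_outside _ _ nil); auto; [constructor|simpl; lia]|].
    apply sup_outside_le; intros; unfold one_seq; rewrite Rabs_R1; lra.
  - apply le_rearr; intros F HF Hl; destruct (Hfreq (S (list_max F))) as [m [Hm1 Hm2]].
    eapply Rle_trans; [|apply (Rabs_le_sup_outside _ F m); auto; apply not_In_gt_list_max; lia].
    unfold sscal; rewrite Rabs_mult, Rabs_right by (left; apply Rinv_0_lt_compat; auto).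
    apply Rmult_le_reg_l with e; auto; rewrite <- Rmult_assoc, Rinv_r, Rmult_1_l; lra.
Qed.

Lemma one_not_c0 : ~ in_c0 one_seq.
Proof.
  intros H; pose proof (is_lim_seq_unique _ _ H) as Hlim.
  unfold one_seq in Hlim; rewrite Lim_seq_const in Hlim; injection Hlim; lra.
Qed.

Definition shift (x : seqR) : seqR := fun n => match n with O => 0 | S n' => x n' end.

Lemma shift_dunford_schwartz : dunford_schwartz shift.
Proof.
  split; [split|split].
  - intros x [M HM]; exists M; intros [|n]; simpl; auto.
    rewrite Rabs_R0; specialize (HM 0%nat); pose proof (Rabs_pos (x 0%nat)); lra.
  - intros x y a b _ _; apply functional_extensionality; intros [|n]; unfold sadd, sscal; simpl; ring.
  - intros x Hx; assert (H : ex_series (fun n => Rabs (shift x n)))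
      by (apply (proj2 (ex_series_incr_1 (fun n => Rabs (shift x n)))), Hx).
    split; auto; unfold l1_norm; rewrite Series_incr_1 by auto; simpl; rewrite Rabs_R0; right; ring.
  - intros x Hx; apply linf_norm_le; intros [|n]; simpl;
      [rewrite Rabs_R0; apply linf_norm_ge0|apply Rabs_le_linf_norm]; auto.
Qed.

Lemma cesaro_shift_one N m : cesaro shift one_seq N m = / INR (S N) * INR (Nat.min (S N) (S m)).
Proof.
  assert (Hiter : forall k, Nat.iter k shift one_seq m = if Nat.leb k m then 1 else 0).
  { intros k; revert m; induction k as [|k IH]; intros m; [reflexivity|].
    destruct m; simpl; [reflexivity|]; unfold shift at 1; rewrite IH; reflexivity. }
  unfold cesaro; rewrite sum_n_sum_lt, (sum_lt_ext _ (fun j => if Nat.leb j m then 1 else 0)) by auto.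
  f_equal; generalize (S N) as n; induction n as [|n IH]; [reflexivity|]; simpl sum_lt; rewrite IH.
  destruct (Nat.leb_spec n m); [rewrite !Nat.min_l, S_INR by lia|rewrite !Nat.min_r by lia]; ring.
Qed.

Lemma cesaro_shift_one_not_uniform xh : bounded xh ->
  ~ is_lim_seq (fun N => linf_norm (ssub (cesaro shift one_seq N) xh)) 0.
Proof.
  intros Hbh Hl; apply is_lim_seq_spec in Hl; destruct (Hl (mkposreal (1 / 4) ltac:(lra))) as [N HN].
  assert (Hb : forall M, bounded (ssub (cesaro shift one_seq M) xh)).
  { intros M; apply bounded_sub; auto; rewrite cesaro_avg.
    apply avg_bounded; [apply shift_dunford_schwartz|exists 1; intros; unfold one_seq; rewrite Rabs_R1; lra]. }
  assert (Hclose : forall M, (N <= M)%nat -> Rabs (cesaro shift one_seq M N - xh N) < 1 / 4).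
  { intros M HM; specialize (HN M HM); simpl in HN.
    rewrite Rminus_0_r, Rabs_pos_eq in HN by (apply linf_norm_ge0, Hb).
    eapply Rle_lt_trans; [apply (Rabs_le_linf_norm (ssub _ xh) N (Hb M))|exact HN]. }
  pose proof (Hclose N (le_n _)) as H1; pose proof (Hclose (S (2 * N)) ltac:(lia)) as H2.
  rewrite cesaro_shift_one, Nat.min_l, Rinv_l in H1 by (try apply not_0_INR; lia).
  rewrite cesaro_shift_one, Nat.min_r in H2 by lia.
  replace (/ INR (S (S (2 * N))) * INR (S N)) with (1 / 2) in H2.
  - apply Rabs_def2 in H1; apply Rabs_def2 in H2; lra.
  - replace (S (S (2 * N))) with (2 * S N)%nat by lia; rewrite mult_INR; simpl (INR 2).
    field; apply not_0_INR; lia.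
Qed.

Theorem theorem3p6 (E : seqR -> Prop) (normE : seqR -> R) :
  fully_symmetric_seq_space E normE ->
  (uniform_IET_property E <-> (forall x, E x -> in_c0 x)) /\
  ((forall x, E x -> in_c0 x) <-> ~ E one_seq).
Proof.
  intros HE; pose proof HE as [Hsym _]; pose proof Hsym as [[Hbd _] _].
  assert (Hc0_iff : (forall x, E x -> in_c0 x) <-> ~ E one_seq).
  { split.
    - intros Hc0 Hone; apply one_not_c0, Hc0, Hone.
    - intros Hnone x Ex; apply NNPP; intros Hx; apply Hnone, (one_in_of_not_c0 E normE x); auto. }
  split; [split|exact Hc0_iff].
  - intros Hiet; apply Hc0_iff; intros Hone.
    destruct (Hiet one_seq Hone shift shift_dunford_schwartz) as [xh [Exh Hl]].
    apply (cesaro_shift_one_not_uniform xh); auto.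
  - apply (uniform_IET_of_c0 E normE HE).
Qed.
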